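(* Let $r$ be an ELP rule over atoms $\mathcal{A}$ and epistemic literals $\mathcal{E}$, and let $\Pi_r = (\mathcal{A}, \mathcal{E}, \{ r \})$. Then $r$ is tautological if and only if $\mathcal{SE}_{\Pi_r}(\Phi) = \mathcal{S}_\mathcal{A}$ for each consistent guess $\Phi \subseteq \mathcal{E}$.
   Context: A literal over a set of atoms $\mathcal{A}$ is an atom $a$ or $\neg a$. An interpretation is $I\subseteq\mathcal{A}$; $I\models a$ iff $a\in I$, $I\models\neg\ell$ iff $I\not\models\ell$. A (plain) logic program $(\mathcal{A},\mathcal{R})$ has rules $a_1\vee\cdots\vee a_l \leftarrow a_{l+1},\ldots,a_m,\neg\ell_1,\ldots,\neg\ell_n$ ($\ell_i$ literals); $H(r)$ head, $B(r)$ body, $B^+(r)=\{a_{l+1},\ldots,a_m\}$; $M\models r$ iff $M\models B(r)$ implies $M\cap H(r)\neq\emptyset$; $\mathrm{Mods}(\Pi)$ is the set of models. GL-reduct: $\Pi^I=(\mathcal{A},\{H(r)\leftarrow B^+(r)\mid r\in\mathcal{R},\ I\models\neg\ell\ \forall\neg\ell\in B(r)\})$ ($\neg\neg\neg a$ treated as $\neg a$); answer sets: models $M$ with no $M'\subset M$ a model of $\Pi^M$. An SE-model of $\Pi$ is $(X,Y)$ with $X\subseteq Y\subseteq\mathcal{A}$, $Y\models\Pi$, $X\models\Pi^Y$; $\mathrm{SE}(\Pi)$ the set of SE-models; $\mathcal{S}_\mathcal{A}$ denotes the set of all pairs $(X,Y)$ with $X\subseteq Y\subseteq\mathcal{A}$.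 An ELP is $(\mathcal{A},\mathcal{E},\mathcal{R})$ with $\mathcal{E}$ a set of epistemic literals $\mathbf{not}\,\ell$ and rules (ELP rules) $a_1\vee\cdots\vee a_k\leftarrow \ell_1,\ldots,\ell_m,\xi_1,\ldots,\xi_j,\neg\xi_{j+1},\ldots,\neg\xi_n$, $\xi_i\in\mathcal{E}$. A guess is $\Phi\subseteq\mathcal{E}$; it is consistent iff whenever $\mathcal{E}$ contains both $\mathbf{not}\,a$ and $\mathbf{not}\,\neg a$, $\Phi$ contains at least one of them. $\mathcal{I}$ is $\Phi$-compatible w.r.t. $\mathcal{E}$ iff $\mathcal{I}\neq\emptyset$, every $\mathbf{not}\,\ell\in\Phi$ has some $I\in\mathcal{I}$ with $I\not\models\ell$, and every $\mathbf{not}\,\ell\in\mathcal{E}\setminus\Phi$ has $I\models\ell$ for all $I\in\mathcal{I}$. The epistemic reduct $\Pi^\Phi=(\mathcal{A},\mathcal{R}^\Phi)$ replaces each $\mathbf{not}\,\ell\in\Phi$ by $\top$ and every other $\mathbf{not}$ by $\neg$. $\Phi$ is realizable in $\Pi$ iff some subset of $\mathrm{Mods}(\Pi^\Phi)$ is $\Phi$-compatible. SE-function: $\mathcal{SE}_\Pi(\Phi)=\mathrm{SE}(\Pi^\Phi)$ if $\Phi$ is realizable in $\Pi$, else $\emptyset$. Candidate world views are sets $AS(\Pi^\Phi)$ that are $\Phi$-compatible; world views are those with subset-maximal guess. Two ELPs $\Pi_1,\Pi_2$ are strongly equivalent iff for every ELP $\Pi$, $\Pi_1\cup\Pi$ and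 $\Pi_2\cup\Pi$ (componentwise union) have the same world views. An ELP rule $r$ is tautological iff $\Pi_r=(\mathcal{A},\mathcal{E},\{r\})$ is strongly equivalent to $(\mathcal{A},\mathcal{E},\emptyset)$. *)

From Stdlib Require List.
From mathcomp Require Import all_boot.
Set Implicit Arguments. Unset Strict Implicit. Unset Printing Implicit Defensive.

Section ELP.
Variable V : eqType.

(* A literal: (true, a) is the atom a, (false, a) is ~a. *)
Definition lit := (bool * V)%type.
Definition LPos (a : V) : lit := (true, a).
Definition LNeg (a : V) : lit := (false, a).

Definition interp := V -> Prop.

Definition lit_sat (I : interp) (l : lit) : Prop :=
  if l.1 then I l.2 else ~ I l.2.

(* the literal "complement": ~(a) = ~a, ~(~a) treated as a (used to render
   ~~~a as ~a in the epistemic reduct) *)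
Definition lit_flip (l : lit) : lit := (~~ l.1, l.2).

(* body elements of plain rules: an atom a, a negated literal ~l (i.e. ~a or
   ~~a), and the constants T and ~T arising in the epistemic reduct *)
Inductive pbelem := PAtom of V | PNot of lit | PTop | PNotTop.

Record prule := PRule { phead : seq V; pbody : seq pbelem }.

Record pprog := PProg { patoms : V -> Prop; prules : prule -> Prop }.

Definition pbelem_sat (I : interp) (e : pbelem) : Prop :=
  match e with
  | PAtom a => I a
  | PNot l => ~ lit_sat I l
  | PTop => True
  | PNotTop => False
  end.

Definition body_sat (I : interp) (b : seq pbelem) : Prop :=
  forall e, List.In e b -> pbelem_sat I e.

Definition prule_sat (I : interp) (r : prule) : Prop :=
  body_sat I (pbody r) -> exists a, List.In a (phead r) /\ I a.

Definition isubset (I J : interp) : Prop := forall a, I a -> J a.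
Definition istrict (I J : interp) : Prop := isubset I J /\ exists a, J a /\ ~ I a.

Definition is_model (P : pprog) (M : interp) : Prop :=
  isubset M (patoms P) /\ forall r, prules P r -> prule_sat M r.

Definition pos_body (b : seq pbelem) : seq V :=
  pmap (fun e => if e is PAtom a then Some a else None) b.

Definition neg_ok (I : interp) (b : seq pbelem) : Prop :=
  forall e, List.In e b ->
    match e with
    | PNot l => ~ lit_sat I l
    | PNotTop => False
    | _ => True
    end.

Definition gl_reduct (P : pprog) (I : interp) : pprog :=
  PProg (patoms P)
    (fun r' => exists r, prules P r /\ neg_ok I (pbody r) /\
                r' = PRule (phead r) (map PAtom (pos_body (pbody r)))).

Definition is_answer_set (P : pprog) (M : interp) : Prop :=
  is_model P M /\ ~ exists M', istrict M' M /\ is_model (gl_reduct P M) M'.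

Definition is_SE (P : pprog) (X Y : interp) : Prop :=
  isubset X Y /\ isubset Y (patoms P) /\ is_model P Y /\ is_model (gl_reduct P Y) X.

(* ELP rules: head, literals l_i, epistemic literals xi_i (positive), and
   epistemic literals under ~ ; the epistemic literal "not l" is represented
   by its literal l. *)
Record erule := ERule { ehead : seq V; elits : seq lit;
                        eeps : seq lit; eneps : seq lit }.

Record elp := ELP { eatoms : seq V; eE : seq lit; erules : seq erule }.

Definition elp_union (P Q : elp) : elp :=
  ELP (eatoms P ++ eatoms Q) (eE P ++ eE Q) (erules P ++ erules Q).

Definition wf_erule (A : seq V) (E : seq lit) (r : erule) : Prop :=
  {subset ehead r <= A} /\ (forall l, l \in elits r -> l.2 \in A) /\
  {subset eeps r <= E} /\ {subset eneps r <= E}.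

Definition wf_elp (P : elp) : Prop :=
  (forall l, l \in eE P -> l.2 \in eatoms P) /\
  forall r, List.In r (erules P) -> wf_erule (eatoms P) (eE P) r.

Definition lit_to_pb (l : lit) : pbelem :=
  if l.1 then PAtom l.2 else PNot (LPos l.2).

Definition ereduct_rule (Phi : seq lit) (r : erule) : prule :=
  PRule (ehead r)
    (map lit_to_pb (elits r)
     ++ map (fun x => if x \in Phi then PTop else PNot x) (eeps r)
     ++ map (fun x => if x \in Phi then PNotTop else PNot (lit_flip x)) (eneps r)).

Definition ereduct (P : elp) (Phi : seq lit) : pprog :=
  PProg (fun a => a \in eatoms P)
        (fun r => exists2 r0, List.In r0 (erules P) & r = ereduct_rule Phi r0).

Definition is_guess (P : elp) (Phi : seq lit) : Prop := {subset Phi <= eE P}.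

Definition consistent_guess (E Phi : seq lit) : Prop :=
  forall a, LPos a \in E -> LNeg a \in E -> (LPos a \in Phi) || (LNeg a \in Phi).

Definition compatible (E Phi : seq lit) (II : interp -> Prop) : Prop :=
  (exists I, II I) /\
  (forall l, l \in Phi -> exists I, II I /\ ~ lit_sat I l) /\
  (forall l, l \in E -> l \notin Phi -> forall I, II I -> lit_sat I l).

Definition realizable (P : elp) (Phi : seq lit) : Prop :=
  exists II : interp -> Prop,
    (forall I, II I -> is_model (ereduct P Phi) I) /\ compatible (eE P) Phi II.

Definition SE_fun (P : elp) (Phi : seq lit) (X Y : interp) : Prop :=
  realizable P Phi /\ is_SE (ereduct P Phi) X Y.

Definition S_pairs (A : seq V) (X Y : interp) : Prop :=
  isubset X Y /\ isubset Y (fun a => a \in A).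

Definition candidate (P : elp) (Phi : seq lit) : Prop :=
  is_guess P Phi /\ compatible (eE P) Phi (is_answer_set (ereduct P Phi)).

Definition guess_strict (Phi Phi' : seq lit) : Prop :=
  {subset Phi <= Phi'} /\ exists x, x \in Phi' /\ x \notin Phi.

Definition world_view (P : elp) (W : interp -> Prop) : Prop :=
  exists Phi, candidate P Phi /\
    (forall Phi', is_guess P Phi' -> guess_strict Phi Phi' -> ~ candidate P Phi') /\
    (forall I, W I <-> is_answer_set (ereduct P Phi) I).

Definition strongly_equiv (P1 P2 : elp) : Prop :=
  forall P, wf_elp P -> forall W,
    world_view (elp_union P1 P) W <-> world_view (elp_union P2 P) W.

Definition tautological (A : seq V) (E : seq lit) (r : erule) : Prop :=
  strongly_equiv (ELP A E [:: r]) (ELP A E [::]).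

End ELP.

From Stdlib Require Import List Classical FunctionalExtensionality PropExtensionality.
From mathcomp Require Import all_boot.
Set Implicit Arguments. Unset Strict Implicit. Unset Printing Implicit Defensive.

(* If SE(Π_r^Φ) = S_A for every consistent guess Φ, then the reduct of r is satisfied by
   every interpretation, and its positive part by every X ⊆ Y whenever Y satisfies its
   negated body.  Adding r to any program then changes neither the models nor the models
   of the GL-reducts that matter for minimality, hence neither answer sets, candidate
   world views nor world views.

   Conversely, let r be tautological and Φ consistent.  A context program with guard
   constraints forces every candidate world view to have guess Φ on E.  For each pair
   (X, Y) of a finite list it adds a fresh tag p, the rules a ← p (a ∈ X) and a ← c, p
   (a, c ∈ Y, c ∉ X), and the disjunction of all tags.  For Y a model of the remaining
   rules compatible with Φ, {p} ∪ Y is then an answer set iff Y ⊆ X or X violates the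
   GL-reduct of the remaining rules w.r.t. Y.  As adding r does not change the world
   view, comparing answer sets with and without r shows that Φ is realizable, that
   Y ⊨ r^Φ and that X ⊨ (r^Φ)^Y.  Fresh tags need infinitely many atoms. *)

Lemma In_mem (T : eqType) (x : T) (s : seq T) : List.In x s <-> x \in s.
Proof.
elim: s => [|y s IH] /=; first by rewrite in_nil.
rewrite in_cons; split=> [[->|/IH->]|/orP[/eqP->|/IH]]; rewrite ?eqxx ?orbT; auto.
Qed.

Lemma uniq_map_inj_in (T U : eqType) (f : T -> U) (s : seq T) :
  uniq (map f s) -> {in s &, injective f}.
Proof.
elim: s => //= x s IH /andP [fx_notin uniq_s] y z; rewrite !in_cons.
case/orP=> [/eqP->|ys] /orP [/eqP->|zs] // Efyz; last exact: IH.
- by move: fx_notin; rewrite Efyz map_f.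
- by move: fx_notin; rewrite -Efyz map_f.
Qed.

Lemma seq_comprehension (T : eqType) (P : T -> Prop) (s : seq T) :
  exists t : seq T, forall x, x \in t <-> x \in s /\ P x.
Proof.
elim: s => [|y s [t Ht]]; first by exists [::] => x; rewrite in_nil; split=> [|[]].
have [Py | nPy] := classic (P y); [exists (y :: t) | exists t] => x;
  rewrite ?in_cons; case: (eqVneq x y) => [->|_] /=; rewrite ?eqxx ?Ht; tauto.
Qed.

Section Satisfaction.
Variable V : eqType.
Implicit Types (A s : seq V) (I J : interp V) (l : lit V) (e : pbelem V) (b : seq (pbelem V)).

Definition agree_on A I J := forall a, a \in A -> (I a <-> J a).

Definition interp_of s : interp V := fun a => a \in s.

Definition restrict A I : interp V := fun a => I a /\ a \in A.

Definition pbelem_over A e : Prop :=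
  match e with PAtom a => a \in A | PNot l => l.2 \in A | _ => True end.

Definition prule_over A (r : prule V) : Prop :=
  (forall a, List.In a (phead r) -> a \in A) /\
  (forall e, List.In e (pbody r) -> pbelem_over A e).

Definition pos_rule (r : prule V) : prule V :=
  PRule (phead r) (map (@PAtom V) (pos_body (pbody r))).


Lemma agree_on_restrict A I : agree_on A I (restrict A I).
Proof. by move=> a Ha; rewrite /restrict; tauto. Qed.

Lemma finite_restriction A I : exists2 s, {subset s <= A} & agree_on A I (interp_of s).
Proof.
have [s Hs] := seq_comprehension I A.
exists s => [a /Hs [] //|a Ha].
by split=> [Ia|/Hs [] //]; apply/Hs.
Qed.

Lemma agree_on_cons A s p : p \notin A -> agree_on A (interp_of s) (interp_of (p :: s)).
Proof.
by move=> pA a aA; rewrite /interp_of in_cons; case: eqP => [Eap|] //; rewrite -Eap aA in pA.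
Qed.

Lemma flip_sat I l : lit_sat I (lit_flip l) <-> ~ lit_sat I l.
Proof. by case: l => [[] a]; rewrite /lit_sat /=; split; try tauto; apply: NNPP. Qed.

Lemma constraint_sat I e : prule_sat I (PRule [::] [:: e]) <-> ~ pbelem_sat I e.
Proof.
rewrite /prule_sat /body_sat /=; split=> [H He|H Hb]; last by case: H; apply: Hb; left.
by case: H => [e' [<-|[]] //|a [[]]].
Qed.

Lemma lit_sat_agree A I J l : agree_on A I J -> l.2 \in A -> (lit_sat I l <-> lit_sat J l).
Proof.
move=> H /H; rewrite /lit_sat; case: l.1 => //; tauto.
Qed.

Lemma pbelem_sat_agree A I J e : agree_on A I J -> pbelem_over A e ->
  (pbelem_sat I e <-> pbelem_sat J e).
Proof.
move=> H; case: e => [a|l||] //= Ha; first exact: H.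
by have := lit_sat_agree H Ha; tauto.
Qed.

Lemma body_sat_agree A I J b : agree_on A I J -> (forall e, List.In e b -> pbelem_over A e) ->
  (body_sat I b <-> body_sat J b).
Proof.
move=> H Hb; split=> Hs e He; have := pbelem_sat_agree H (Hb e He); have := Hs e He; tauto.
Qed.

Lemma neg_ok_agree A I J b : agree_on A I J -> (forall e, List.In e b -> pbelem_over A e) ->
  (neg_ok I b <-> neg_ok J b).
Proof.
move=> H Hb; split=> Hs e He; move: (Hs e He) (Hb e He);
  case: e He => //= l _ Hn /(lit_sat_agree H); tauto.
Qed.

Lemma prule_sat_agree A I J r : agree_on A I J -> prule_over A r ->
  (prule_sat I r <-> prule_sat J r).
Proof.
move=> H [Hh Hb]; rewrite /prule_sat (body_sat_agree H Hb).
by split=> Hs /Hs [a [Ha /(H _ (Hh _ Ha)) Ia]]; exists a.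
Qed.

Lemma In_pos_body b a : List.In a (pos_body b) <-> List.In (PAtom a) b.
Proof.
rewrite /pos_body; elim: b => [|[x|l||] b IH] /=; rewrite ?IH; intuition congruence.
Qed.

Lemma prule_over_pos A r : prule_over A r -> prule_over A (pos_rule r).
Proof.
by case=> Hh Hb; split=> //= _ /in_map_iff [a [<- /In_pos_body /Hb]].
Qed.

Lemma finite_falsifiers A (II : interp V -> Prop) (Ls : seq (lit V)) :
  (forall l, l \in Ls -> l.2 \in A) ->
  (forall l, l \in Ls -> exists I, II I /\ ~ lit_sat I l) ->
  exists Ks : seq (seq V),
    (forall K, K \in Ks -> exists2 I, II I & {subset K <= A} /\ agree_on A I (interp_of K)) /\
    (forall l, l \in Ls -> exists2 K, K \in Ks & ~ lit_sat (interp_of K) l).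
Proof.
elim: Ls => [|l Ls IH] LsA falsified; first by exists [::].
have sub : {subset Ls <= l :: Ls} by move=> l' Hl'; rewrite in_cons Hl' orbT.
have [Ks [KsII Ksfalse]] := IH (fun l' Hl' => LsA l' (sub l' Hl'))
                              (fun l' Hl' => falsified l' (sub l' Hl')).
have [I [HI nl]] := falsified l (mem_head _ _).
have [K KA ag] := finite_restriction A I.
exists (K :: Ks); split=> [K'|l']; rewrite in_cons => /orP [/eqP ->|].
- by exists I.
- exact: KsII.
- by exists K; [exact: mem_head | move/(lit_sat_agree ag (LsA _ (mem_head _ _)))].
- by case/Ksfalse=> K' HK' nK'; exists K' => //; rewrite in_cons HK' orbT.
Qed.

End Satisfaction.

Section EpistemicReduct.
Variable V : eqType.
Implicit Types (Q : elp V) (E Phi : seq (lit V)) (I M : interp V).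

Lemma prule_over_ereduct A E Phi (r : erule V) : (forall l, l \in E -> l.2 \in A) ->
  wf_erule A E r -> prule_over A (ereduct_rule Phi r).
Proof.
move=> HE [Hh [Hl [He Hn]]]; split=> [a /In_mem /Hh //|] /= e.
case/in_app_iff=> [|/in_app_iff[]] /in_map_iff [x [<- /In_mem Hx]] /=.
- by rewrite /lit_to_pb; case: ifP => _ /=; apply: Hl.
- by case: ifP => _ //=; apply/HE/He.
- by case: ifP => _ //=; apply/HE/Hn.
Qed.

Definition sat_reduct (R : seq (erule V)) Phi M : Prop :=
  forall r, List.In r R -> prule_sat M (ereduct_rule Phi r).

Definition sat_gl_reduct (R : seq (erule V)) Phi M I : Prop :=
  forall r, List.In r R -> neg_ok I (pbody (ereduct_rule Phi r)) ->
    prule_sat M (pos_rule (ereduct_rule Phi r)).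

Lemma is_model_ereduct Q Phi M : is_model (ereduct Q Phi) M <->
  isubset M (fun a => a \in eatoms Q) /\ sat_reduct (erules Q) Phi M.
Proof.
split=> -[HA HR]; split=> //.
- by move=> r Hr; apply: HR; exists r.
- by move=> _ [r Hr ->]; apply: HR.
Qed.

Lemma is_model_gl_ereduct Q Phi I M : is_model (gl_reduct (ereduct Q Phi) I) M <->
  isubset M (fun a => a \in eatoms Q) /\ sat_gl_reduct (erules Q) Phi M I.
Proof.
split=> -[HA HR]; split=> //.
- by move=> r Hr Hn; apply: HR; exists (ereduct_rule Phi r); split; first exists r.
- by move=> _ [_ [[r Hr ->] [Hn ->]]]; apply: HR.
Qed.

Lemma eq_in_ereduct_rule E Phi1 Phi2 (r : erule V) :
  {subset eeps r <= E} -> {subset eneps r <= E} -> {in E, Phi1 =i Phi2} ->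
  ereduct_rule Phi1 r = ereduct_rule Phi2 r.
Proof.
move=> He Hn H; rewrite /ereduct_rule; congr (PRule _ (_ ++ _ ++ _));
  apply/eq_in_map => x; [by move/He/H -> | by move/Hn/H ->].
Qed.

Lemma consistent_guess_catl E E' Phi : consistent_guess (E ++ E') Phi -> consistent_guess E Phi.
Proof. by move=> H a Ha Hb; apply: H; rewrite mem_cat ?Ha ?Hb. Qed.

Lemma compatible_consistent E Phi (II : interp V -> Prop) :
  compatible E Phi II -> consistent_guess E Phi.
Proof.
case=> [[I HI] [_ Hout]] a Ha Hb; apply/negPn/negP; rewrite negb_or => /andP [Hna Hnb].
by have := Hout _ Hb Hnb I HI; have := Hout _ Ha Hna I HI; rewrite /lit_sat.
Qed.

Lemma guess_extension E Phi I : {subset Phi <= E} -> consistent_guess E Phi ->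
  exists Phi', [/\ {subset Phi <= Phi'}, {subset Phi' <= E}, consistent_guess E Phi',
    forall x, x \in Phi' -> x \notin Phi -> ~ lit_sat I x &
    forall l, l \in E -> l \notin Phi' -> lit_sat I l].
Proof.
move=> sub cons; have [Fs HFs] := seq_comprehension (fun l => ~ lit_sat I l) E.
exists (Phi ++ Fs); split=> [x Hx|x|a Ha Hb|x|l Hl]; rewrite ?mem_cat.
- by rewrite Hx.
- by case/orP=> [/sub|/HFs []].
- by case/orP: (cons a Ha Hb) => ->; rewrite ?orbT.
- by case/orP=> [->|/HFs []].
- rewrite negb_or => /andP [_ /negP nF]; apply: NNPP => nl.
  by apply/nF/HFs.
Qed.

Definition pbelem_neg_ok I (e : pbelem V) : Prop :=
  match e with PNot l => ~ lit_sat I l | PNotTop => False | _ => True end.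

Lemma pos_rule_sat I (r : prule V) :
  prule_sat I r -> neg_ok I (pbody r) -> prule_sat I (pos_rule r).
Proof.
move=> Hr Hneg Hpos; apply: Hr => e He; move: (Hneg e He); case: e He => //= a Ha _.
by apply: (Hpos (PAtom a)); apply/in_map/In_pos_body.
Qed.

(* Stated for an arbitrary P so that it covers both [body_sat] and [neg_ok]. *)
Lemma In_ereduct_body_guess_ext (P : pbelem V -> Prop) Phi Phi' (r : erule V) :
  {subset Phi <= Phi'} -> P (PTop V) ->
  (forall x, x \in Phi' -> x \notin Phi -> ~ P (PNot (lit_flip x))) ->
  (forall e, List.In e (pbody (ereduct_rule Phi r)) -> P e) ->
  forall e, List.In e (pbody (ereduct_rule Phi' r)) -> P e.
Proof.
move=> sub Ptop Pflip H e; rewrite /= !in_app_iff.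
have Hl e0 : List.In e0 (map (@lit_to_pb V) (elits r)) -> P e0.
  by move=> He0; apply: H; apply/in_app_iff; left.
have He x : List.In x (eeps r) -> P (if x \in Phi then PTop V else PNot x).
  by move=> Hx; apply: H; rewrite /= !in_app_iff; right; left; apply: in_map.
have Hn x : List.In x (eneps r) -> P (if x \in Phi then PNotTop V else PNot (lit_flip x)).
  by move=> Hx; apply: H; rewrite /= !in_app_iff; right; right; apply: in_map.
case=> [/Hl //|[] /in_map_iff [x [<- Hx]]].
- by have := He x Hx; case: (boolP (x \in Phi')) => // xP'; rewrite (negbTE (contra (@sub x) xP')).
- have := Hn x Hx; case: (boolP (x \in Phi')) => xP'; case: (boolP (x \in Phi)) => xP //=.
  + by move/(Pflip x xP' xP).
  + by rewrite sub in xP'.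
Qed.

Lemma ereduct_rule_guess_ext I Phi Phi' (r : erule V) :
  {subset Phi <= Phi'} -> (forall x, x \in Phi' -> x \notin Phi -> ~ lit_sat I x) ->
  (body_sat I (pbody (ereduct_rule Phi r)) -> body_sat I (pbody (ereduct_rule Phi' r))) /\
  (neg_ok I (pbody (ereduct_rule Phi r)) -> neg_ok I (pbody (ereduct_rule Phi' r))).
Proof.
move=> sub false_new; have flip x : x \in Phi' -> x \notin Phi -> ~ ~ lit_sat I (lit_flip x).
  by move=> xP' xP; rewrite flip_sat; have := false_new x xP' xP; tauto.
split; first exact: (In_ereduct_body_guess_ext (P := pbelem_sat I)).
exact: (In_ereduct_body_guess_ext (P := pbelem_neg_ok I)).
Qed.

Lemma pos_rule_ereduct_rule Phi Phi' (r : erule V) :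
  pos_rule (ereduct_rule Phi r) = pos_rule (ereduct_rule Phi' r).
Proof.
have no_atoms (T : Type) (f : T -> pbelem V) s :
    (forall x, if f x is PAtom _ then False else True) -> pos_body (map f s) = [::].
  by move=> Hf; elim: s => //= x s; rewrite /pos_body /=; case: (f x) (Hf x).
have pos_body_cat b1 b2 : pos_body (b1 ++ b2) = pos_body b1 ++ pos_body b2 by apply: pmap_cat.
rewrite /pos_rule /= !pos_body_cat !(no_atoms _ _ (eeps r)) ?(no_atoms _ _ (eneps r)) //;
  by move=> x; case: ifP.
Qed.

End EpistemicReduct.

Section SEValidRules.
Variable V : eqType.

(* Every pair in S_A is an SE-model of the one-rule program {r}. *)
Definition se_valid (r : prule V) : Prop :=
  (forall Y : interp V, prule_sat Y r) /\
  (forall X Y : interp V, isubset X Y -> neg_ok Y (pbody r) -> prule_sat X (pos_rule r)).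

Variables (As : seq V) (Es : seq (lit V)) (R : seq (erule V)) (r : erule V).

Lemma answer_set_cons_se_valid Phi : se_valid (ereduct_rule Phi r) ->
  is_answer_set (ereduct (ELP As Es (r :: R)) Phi) = is_answer_set (ereduct (ELP As Es R) Phi).
Proof.
case=> sat_all sat_pos; apply: functional_extensionality => I.
apply: propositional_extensionality.
have models M : is_model (ereduct (ELP As Es (r :: R)) Phi) M <->
                is_model (ereduct (ELP As Es R) Phi) M.
  rewrite !is_model_ereduct /=; split=> -[HA HR]; split=> // r0.
  - by move=> Hr; apply: HR; right.
  - by case=> [<-|]; [apply: sat_all | apply: HR].
have gl_models M' : isubset M' I ->
    is_model (gl_reduct (ereduct (ELP As Es (r :: R)) Phi) I) M' <->
    is_model (gl_reduct (ereduct (ELP As Es R) Phi) I) M'.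
  move=> sub; rewrite !is_model_gl_ereduct /=; split=> -[HA HR]; split=> // r0.
  - by move=> Hr; apply: HR; right.
  - by case=> [<-|]; [apply: sat_pos | apply: HR].
rewrite /is_answer_set models.
split=> -[HI Hmin]; split=> // -[M' [[sub ?] /(gl_models _ sub) ?]];
  by apply: Hmin; exists M'.
Qed.

Lemma world_view_cons_se_valid :
  (forall Phi, consistent_guess Es Phi -> se_valid (ereduct_rule Phi r)) ->
  forall W, world_view (ELP As Es (r :: R)) W <-> world_view (ELP As Es R) W.
Proof.
move=> valid W.
have AS Phi : consistent_guess Es Phi ->
    is_answer_set (ereduct (ELP As Es (r :: R)) Phi) = is_answer_set (ereduct (ELP As Es R) Phi).
  by move/valid/answer_set_cons_se_valid.
have cand Phi : candidate (ELP As Es (r :: R)) Phi <-> candidate (ELP As Es R) Phi.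
  rewrite /candidate /=; split=> -[Hg Hc]; split=> //;
    have := AS _ (compatible_consistent Hc); [move <- | move ->] => //.
split=> -[Phi [Hc [Hmax HW]]]; exists Phi; have c := compatible_consistent (proj2 Hc).
- split; [exact/cand | split; last by rewrite -(AS _ c)].
  by move=> Phi' Hg Hs /cand; apply: Hmax.
- split; [exact/cand | split; last by rewrite (AS _ c)].
  by move=> Phi' Hg Hs /cand; apply: Hmax.
Qed.

End SEValidRules.

Section Context.
Variable V : eqType.

(* A branch (p, (X, Y)) carries the tag p of the pair (X, Y). *)
Definition branch := (V * (seq V * seq V))%type.
Implicit Types (A : seq V) (E Phi : seq (lit V)) (b : branch) (bs : seq branch).

(* ⊥ ← not l when l ∉ Φ and ⊥ ← ¬ not l when l ∈ Φ: the reduct under a guess differing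
   from Φ at l is violated by every model compatible with that guess. *)
Definition guard_rule (Phi : seq (lit V)) (l : lit V) : erule V :=
  if l \in Phi then ERule [::] [::] [::] [:: l] else ERule [::] [::] [:: l] [::].

Definition choice_rule (bs : seq branch) : erule V := ERule (map fst bs) [::] [::] [::].

Definition tag_rule (p a : V) : erule V := ERule [:: a] [:: LPos p] [::] [::].

Definition saturation_rule (p a c : V) : erule V := ERule [:: a] [:: LPos c; LPos p] [::] [::].

Definition branch_rules (b : branch) : seq (erule V) :=
  map (tag_rule b.1) b.2.1 ++
  flat_map (fun a => map (saturation_rule b.1 a) [seq c <- b.2.2 | c \notin b.2.1]) b.2.2.

Definition branches_ok A bs : Prop :=
  [/\ uniq (map fst bs), forall b, b \in bs -> b.1 \notin A,
      forall b, b \in bs -> {subset b.2.1 <= b.2.2} & forall b, b \in bs -> {subset b.2.2 <= A}].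

Definition context (A : seq V) (E Phi : seq (lit V)) (bs : seq branch) : elp V :=
  ELP (A ++ map fst bs) E (map (guard_rule Phi) E ++ choice_rule bs :: flat_map branch_rules bs).

Lemma In_branch_rules b r :
  List.In r (branch_rules b) <->
  (exists2 a, a \in b.2.1 & r = tag_rule b.1 a) \/
  (exists a c, [/\ a \in b.2.2, c \in b.2.2, c \notin b.2.1 & r = saturation_rule b.1 a c]).
Proof.
rewrite in_app_iff in_map_iff in_flat_map; split.
- case=> [[a [<- /In_mem Ha]]|[a [/In_mem Ha /in_map_iff [c [<- /In_mem]]]]].
    by left; exists a.
  by rewrite mem_filter => /andP [Hc Hcb]; right; exists a, c.
- case=> [[a Ha ->]|[a [c [Ha Hc Hcb ->]]]]; [left | right].
    by exists a; split=> //; apply/In_mem.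
  exists a; split; first exact/In_mem.
  by apply/in_map_iff; exists c; split=> //; apply/In_mem; rewrite mem_filter Hcb.
Qed.

Lemma guard_rule_reduct Phi Phi' l : ereduct_rule Phi' (guard_rule Phi l) =
  if l \in Phi then PRule [::] [:: if l \in Phi' then PNotTop V else PNot (lit_flip l)]
  else PRule [::] [:: if l \in Phi' then PTop V else PNot l].
Proof. by rewrite /guard_rule; case: ifP. Qed.



Lemma choice_rule_reduct Phi bs : ereduct_rule Phi (choice_rule bs) = PRule (map fst bs) [::].
Proof. by []. Qed.

Lemma wf_context A E Phi bs :
  (forall l, l \in E -> l.2 \in A) -> branches_ok A bs -> wf_elp (context A E Phi bs).
Proof.
move=> wfE [_ _ HXY HYA]; split=> [l Hl|r] /=; first by rewrite mem_cat wfE.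
have sub1 (T : eqType) (x : T) s : x \in s -> {subset [:: x] <= s}.
  by move=> Hx y; rewrite inE => /eqP ->.
have inA a : a \in A -> a \in A ++ map fst bs by rewrite mem_cat => ->.
have tagA b : b \in bs -> b.1 \in A ++ map fst bs by move=> Hb; rewrite mem_cat map_f ?orbT.
case/in_app_iff=> [/in_map_iff [l [<- /In_mem Hl]]|[<-|/in_flat_map [b [/In_mem Hb]]]].
- by rewrite /guard_rule; case: ifP => _; do !split=> //; apply: sub1.
- by do !split=> // a /mapP [b Hb ->]; apply: tagA.
- case/In_branch_rules=> [[a Ha ->]|[a [c [Ha Hc _ ->]]]]; do !split=> //.
  + exact/sub1/inA/(HYA b)/(HXY b).
  + by move=> l; rewrite inE => /eqP ->; apply: tagA.
  + exact/sub1/inA/(HYA b).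
  + by move=> l; rewrite !inE => /orP [] /eqP -> /=; [apply/inA/(HYA b) | apply: tagA].
Qed.

End Context.

Section Probe.
Variable V : eqType.
Variables (A : seq V) (E Phis : seq (lit V)) (bs : seq (branch V)) (R : seq (erule V)).
Hypothesis wfE : forall l, l \in E -> l.2 \in A.
Hypothesis Phis_sub : {subset Phis <= E}.
Hypothesis bs_ok : branches_ok A bs.
Let tags_uniq : uniq (map fst bs) := let: And4 H _ _ _ := bs_ok in H.
Let tags_fresh : forall b, b \in bs -> b.1 \notin A := let: And4 _ H _ _ := bs_ok in H.
Let XY : forall b, b \in bs -> {subset b.2.1 <= b.2.2} := let: And4 _ _ H _ := bs_ok in H.
Let YA : forall b, b \in bs -> {subset b.2.2 <= A} := let: And4 _ _ _ H := bs_ok in H.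
Hypothesis wfR : forall r, List.In r R -> wf_erule A E r.
Let over_R r (Hr : List.In r R) : prule_over A (ereduct_rule Phis r) :=
  prule_over_ereduct Phis wfE (wfR Hr).
Implicit Types (Phi : seq (lit V)) (b : branch V) (Z : seq V) (I M : interp V) (r : erule V).

Definition probe : elp V := elp_union (ELP A E R) (context A E Phis bs).

Lemma In_probe r : List.In r (erules probe) ->
  [\/ List.In r R, exists2 l, l \in E & r = guard_rule Phis l, r = choice_rule bs |
      exists2 b, b \in bs & List.In r (branch_rules b)].
Proof.
case/in_app_iff=> [Hr|/in_app_iff [/in_map_iff [l [<- /In_mem Hl]]|
                    [<-|/in_flat_map [b [/In_mem Hb Hr]]]]].
- by constructor 1.
- by constructor 2; exists l.
- by constructor 3.
- by constructor 4; exists b.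
Qed.

Lemma R_in_probe r : List.In r R -> List.In r (erules probe).
Proof. by move=> Hr; apply/in_app_iff; left. Qed.

Lemma guard_in_probe l : l \in E -> List.In (guard_rule Phis l) (erules probe).
Proof. by move=> Hl; apply/in_app_iff; right; apply/in_app_iff; left; apply/in_map/In_mem. Qed.

Lemma choice_in_probe : List.In (choice_rule bs) (erules probe).
Proof. by apply/in_app_iff; right; apply/in_app_iff; right; left. Qed.

Lemma branch_rule_in_probe b r :
  b \in bs -> List.In r (branch_rules b) -> List.In r (erules probe).
Proof.
move=> Hb Hr; apply/in_app_iff; right; apply/in_app_iff; right; right.
by apply/in_flat_map; exists b; split=> //; apply/In_mem.
Qed.

Lemma probe_epistemic r : List.In r (erules probe) ->
  {subset eeps r <= E} /\ {subset eneps r <= E}.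
Proof.
case/In_probe=> [/wfR [_ [_ []]] //|[l Hl ->]|->|[b _ /In_branch_rules]] //.
- by rewrite /guard_rule; case: ifP => _; split=> // x; rewrite inE => /eqP ->.
- by case=> [[a _ ->]|[a [c [_ _ _ ->]]]].
Qed.

Lemma ereduct_probe_eq_in Phi : {in E, Phi =i Phis} -> ereduct probe Phi = ereduct probe Phis.
Proof.
move=> H; congr PProg; apply: functional_extensionality => r'.
apply: propositional_extensionality.
split=> -[r Hr ->]; exists r => //; have [He Hn] := probe_epistemic Hr.
- exact: eq_in_ereduct_rule He Hn H.
- by rewrite (eq_in_ereduct_rule He Hn H).
Qed.

Lemma model_guard I l : is_model (ereduct probe Phis) I -> l \in E -> l \notin Phis -> lit_sat I l.
Proof.
move=> /is_model_ereduct [_ HI] Hl Hn; have := HI _ (guard_in_probe Hl).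
by rewrite guard_rule_reduct (negbTE Hn) constraint_sat /= => /NNPP.
Qed.

Lemma guess_forced Phi : compatible (eE probe) Phi (is_answer_set (ereduct probe Phi)) ->
  {in E, Phi =i Phis}.
Proof.
case=> [[I AS_I] [_ Hout]] l Hl; have [/is_model_ereduct [_ HI] _] := AS_I.
have := HI _ (guard_in_probe Hl); rewrite guard_rule_reduct.
case: (boolP (l \in Phis)) => Hs; case: (boolP (l \in Phi)) => Hp //=; rewrite constraint_sat /=.
- move=> /NNPP/flip_sat Hnl; exfalso; apply/Hnl/(Hout _ _ Hp _ AS_I).
  by rewrite mem_cat Hl.
- by move/(_ Logic.I).
Qed.

Lemma world_view_probe_intro :
  (exists I, is_answer_set (ereduct probe Phis) I) ->
  (forall l, l \in Phis -> exists I, is_answer_set (ereduct probe Phis) I /\ ~ lit_sat I l) ->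
  world_view probe (is_answer_set (ereduct probe Phis)).
Proof.
move=> ex_AS falsified; exists Phis; split; [split | split=> //].
- by move=> x Hx; rewrite /= mem_cat Phis_sub.
- split=> //; split=> // l; rewrite /= mem_cat orbb => Hl Hn I [HI _].
  exact: model_guard.
- move=> Phi _ [_ [x [Hx Hxn]]] [Hg Hc].
  have xE : x \in E by move: (Hg x Hx); rewrite /= mem_cat orbb.
  by move: Hxn; rewrite -(guess_forced Hc xE) Hx.
Qed.

Lemma world_view_probe_elim W : world_view probe W ->
  (forall I, W I <-> is_answer_set (ereduct probe Phis) I) /\
  compatible (E ++ E) Phis (is_answer_set (ereduct probe Phis)).
Proof.
case=> Phi [[_ Hc] [_ HW]]; have Hg := guess_forced Hc.
rewrite (ereduct_probe_eq_in Hg) in HW Hc; split=> //.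
case: Hc => [ex [Hin Hout]]; split=> //; split=> [l Hl|l Hl Hn].
- by apply: Hin; rewrite Hg // Phis_sub.
- have lE : l \in E by move: Hl; rewrite mem_cat orbb.
  by apply: Hout; rewrite // Hg.
Qed.

Lemma branch_of_tag b b' Z : b \in bs -> b' \in bs -> {subset Z <= A} ->
  interp_of (b.1 :: Z) b'.1 -> b' = b.
Proof.
move=> Hb Hb' ZA; rewrite /interp_of in_cons => /orP [/eqP|/ZA tagA].
- exact: (uniq_map_inj_in tags_uniq Hb' Hb).
- by move: (tags_fresh Hb'); rewrite tagA.
Qed.

Lemma pos_rule_branch_rule Phi b r :
  List.In r (branch_rules b) -> pos_rule (ereduct_rule Phi r) = ereduct_rule Phi r.
Proof. by case/In_branch_rules=> [[a _ ->]|[a [c [_ _ _ ->]]]]. Qed.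

Lemma neg_ok_branch_rule I Phi b r :
  List.In r (branch_rules b) -> neg_ok I (pbody (ereduct_rule Phi r)).
Proof.
case/In_branch_rules=> [[a _ ->]|[a [c [_ _ _ ->]]]] e /=.
- by case=> [<-|[]].
- by case=> [<-|[<-|[]]].
Qed.

Lemma branch_rules_sat Phi b Z : b \in bs -> {subset b.2.1 <= Z} -> {subset Z <= A} ->
  (forall c, c \in Z -> c \in b.2.2 -> c \notin b.2.1 -> {subset b.2.2 <= Z}) ->
  forall b' r, b' \in bs -> List.In r (branch_rules b') ->
  prule_sat (interp_of (b.1 :: Z)) (ereduct_rule Phi r).
Proof.
move=> Hb XZ ZA saturated b' r Hb' /In_branch_rules [[a Ha ->]|[a [c [Ha Hc Hcx ->]]]] body.
- have Eb := branch_of_tag Hb Hb' ZA (body (PAtom b'.1) (or_introl erefl)); subst b'.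
  by exists a; split; [left | rewrite /interp_of in_cons XZ ?orbT].
- have Eb := branch_of_tag Hb Hb' ZA (body (PAtom b'.1) (or_intror (or_introl erefl))); subst b'.
  have cZ : c \in Z.
    move: (body (PAtom c) (or_introl erefl)); rewrite /= /interp_of in_cons => /orP [/eqP Ec|//].
    by move: (tags_fresh Hb); rewrite -Ec (YA Hb Hc).
  by exists a; split; [left | rewrite /interp_of in_cons (saturated c) ?orbT].
Qed.

Lemma gl_model_below_branch b M I : b \in bs ->
  isubset M (interp_of (b.1 :: b.2.2)) -> is_model (gl_reduct (ereduct probe Phis) I) M ->
  [/\ M b.1, forall a, a \in b.2.1 -> M a &
      forall c, c \in b.2.2 -> c \notin b.2.1 -> M c -> forall a, a \in b.2.2 -> M a].
Proof.
move=> Hb sub /is_model_gl_ereduct [_ HM].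
have rule r : List.In r (branch_rules b) -> prule_sat M (ereduct_rule Phis r).
  move=> Hr; rewrite -(pos_rule_branch_rule Phis Hr).
  exact: HM (branch_rule_in_probe Hb Hr) (neg_ok_branch_rule I Hr).
have Mtag : M b.1.
  have [//|//|q [/In_mem /mapP [b' Hb' ->] Mq]] := HM _ choice_in_probe.
  by rewrite -(branch_of_tag Hb Hb' (YA Hb) (sub _ Mq)).
split=> // [a Ha|c Hc Hcx Mc a Ha].
- have /rule : List.In (tag_rule b.1 a) (branch_rules b) by apply/In_branch_rules; left; exists a.
  by case=> [e [<-|[]] //|x [[<-|[]] //]].
- have /rule : List.In (saturation_rule b.1 a c) (branch_rules b).
    by apply/In_branch_rules; right; exists a, c.
  by case=> [e [<-|[<-|[]]] //|x [[<-|[]] //]].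
Qed.

Lemma branch_model b : b \in bs ->
  (forall l, l \in E -> l \notin Phis -> lit_sat (interp_of b.2.2) l) ->
  sat_reduct R Phis (interp_of b.2.2) ->
  is_model (ereduct probe Phis) (interp_of (b.1 :: b.2.2)).
Proof.
move=> Hb guards HR; have ag := agree_on_cons b.2.2 (tags_fresh Hb).
apply/is_model_ereduct; split.
- move=> a; rewrite /interp_of in_cons /= !mem_cat => /orP [/eqP ->|/(YA Hb) -> //].
  by rewrite map_f ?orbT.
- move=> r /In_probe [Hr|[l Hl ->]|->|[b' Hb' Hr]].
  + exact/(prule_sat_agree ag (over_R Hr))/HR.
  + rewrite guard_rule_reduct; case: (boolP (l \in Phis)) => Hs; rewrite constraint_sat //=.
    by apply; apply/(lit_sat_agree ag (wfE Hl))/guards.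
  + rewrite choice_rule_reduct => _ /=; exists b.1; split; last by rewrite /interp_of mem_head.
    by apply/In_mem/map_f.
  + exact: (branch_rules_sat Hb (XY Hb) (YA Hb) (fun _ _ _ _ _ => id) Hb' Hr).
Qed.

Lemma gl_model_branch_lower b : b \in bs ->
  is_model (ereduct probe Phis) (interp_of (b.1 :: b.2.2)) ->
  sat_gl_reduct R Phis (interp_of b.2.1) (interp_of b.2.2) ->
  is_model (gl_reduct (ereduct probe Phis) (interp_of (b.1 :: b.2.2))) (interp_of (b.1 :: b.2.1)).
Proof.
move=> Hb HM satR; apply/is_model_gl_ereduct; split.
  move=> x; rewrite /interp_of in_cons /= !mem_cat => /orP [/eqP ->|/(XY Hb)/(YA Hb) -> //].
  by rewrite map_f ?orbT.
move=> r /In_probe [Hr|[l Hl ->]|->|[b' Hb' Hr]] Hneg.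
- apply/(prule_sat_agree (agree_on_cons b.2.1 (tags_fresh Hb)) (prule_over_pos (over_R Hr))).
  by apply: (satR r Hr); apply/(neg_ok_agree (agree_on_cons b.2.2 (tags_fresh Hb)) (over_R Hr).2).
- move: Hneg; rewrite guard_rule_reduct.
  case: (boolP (l \in Phis)) => Hs /(_ _ (or_introl erefl)) //= nl.
  by case: (nl (model_guard HM Hl Hs)).
- move=> _ /=; exists b.1; split; last by rewrite /interp_of mem_head.
  by apply/In_mem/map_f.
- rewrite (pos_rule_branch_rule _ Hr).
  apply: (branch_rules_sat Hb (fun _ => id) (fun x Hx => YA Hb (XY Hb Hx)) _ Hb' Hr).
  by move=> c cX _ /negP.
Qed.

Lemma branch_answer_set b : b \in bs ->
  (forall l, l \in E -> l \notin Phis -> lit_sat (interp_of b.2.2) l) ->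
  sat_reduct R Phis (interp_of b.2.2) ->
  is_answer_set (ereduct probe Phis) (interp_of (b.1 :: b.2.2)) <->
  {subset b.2.2 <= b.2.1} \/ ~ sat_gl_reduct R Phis (interp_of b.2.1) (interp_of b.2.2).
Proof.
move=> Hb guards HR; split=> [[HM Hmin]|minimal].
- apply: NNPP => /not_or_and [notYX /NNPP satR]; apply: Hmin.
  have [a aY aX] : exists2 a, a \in b.2.2 & a \notin b.2.1.
    apply: NNPP => none; apply: notYX => a aY; apply/negPn/negP => aX.
    by apply: none; exists a.
  exists (interp_of (b.1 :: b.2.1)); split; last exact: gl_model_branch_lower.
  split=> [x|]; first by rewrite /interp_of !in_cons => /orP [-> //|/(XY Hb) ->]; rewrite orbT.
  exists a; split; first by rewrite /interp_of in_cons aY orbT.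
  rewrite /interp_of in_cons (negbTE aX) orbF => /eqP Ea.
  by move: (tags_fresh Hb); rewrite -Ea (YA Hb aY).
- split; first exact: (branch_model Hb guards HR).
  case=> M [[sub [a [Ma nMa]]] HM].
  have [Mtag MX saturated] := gl_model_below_branch Hb sub HM.
  have aY : a \in b.2.2.
    by move: Ma; rewrite /interp_of in_cons => /orP [/eqP Ea|//]; rewrite Ea in nMa.
  have agM : agree_on A (interp_of b.2.1) M.
    move=> c cA; split=> [/MX //|Mc]; move: (sub c Mc); rewrite /interp_of in_cons.
    case/orP=> [/eqP Ec|cY]; first by move: (tags_fresh Hb); rewrite -Ec cA.
    apply/negPn/negP => cX; exact/nMa/(saturated c cY cX Mc).
  case: minimal => [YX|]; first exact/nMa/MX/YX.
  apply=> r Hr Hneg; apply/(prule_sat_agree agM (prule_over_pos (over_R Hr))).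
  case/is_model_gl_ereduct: HM => _ HM; apply: HM (R_in_probe Hr) _.
  exact/(neg_ok_agree (agree_on_cons b.2.2 (tags_fresh Hb)) (over_R Hr).2).
Qed.

Lemma world_view_probe_branches b0 : b0 \in bs ->
  (forall b, b \in bs -> is_answer_set (ereduct probe Phis) (interp_of (b.1 :: b.2.2))) ->
  (forall l, l \in Phis -> exists2 b, b \in bs & ~ lit_sat (interp_of b.2.2) l) ->
  world_view probe (is_answer_set (ereduct probe Phis)).
Proof.
move=> Hb0 AS falsified; apply: world_view_probe_intro.
  by exists (interp_of (b0.1 :: b0.2.2)); apply: AS.
move=> l Hl; have [b Hb nl] := falsified l Hl.
exists (interp_of (b.1 :: b.2.2)); split; first exact: AS.
by move/(lit_sat_agree (agree_on_cons b.2.2 (tags_fresh Hb)) (wfE (Phis_sub Hl))).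
Qed.

End Probe.

Section SingleRule.
Variable V : eqType.
Variables (A : seq V) (E : seq (lit V)) (r : erule V).
Hypothesis wf : wf_elp (ELP A E [:: r]).
Implicit Types (Phi : seq (lit V)) (X Y : interp V).

Let wfE : forall l, l \in E -> l.2 \in A := proj1 wf.
Let wfr : wf_erule A E r := proj2 wf r (or_introl erefl).
Let wf_single : forall r0, List.In r0 [:: r] -> wf_erule A E r0.
Proof. by move=> r0 [<-|[]]. Qed.
Let wf_nil : forall r0, List.In r0 [::] -> wf_erule A E r0.
Proof. by []. Qed.
Let over Phi : prule_over A (ereduct_rule Phi r) := prule_over_ereduct Phi wfE wfr.

Section FullSE.
Hypothesis full : forall Phi, {subset Phi <= E} -> consistent_guess E Phi ->
  forall X Y, SE_fun (ELP A E [:: r]) Phi X Y <-> S_pairs A X Y.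

Lemma se_valid_of_SE_full Phi : consistent_guess E Phi -> se_valid (ereduct_rule Phi r).
Proof.
move=> cons; set PhiE := [seq x <- Phi | x \in E].
have sub : {subset PhiE <= E} by move=> x; rewrite mem_filter => /andP [].
have consE : consistent_guess E PhiE by move=> a Ha Hb; rewrite !mem_filter Ha Hb; apply: cons.
have <- : ereduct_rule PhiE r = ereduct_rule Phi r.
  by case: wfr => _ [_ [He Hn]]; apply: eq_in_ereduct_rule He Hn _ => l Hl; rewrite mem_filter Hl.
have SE X Y : isubset X Y -> is_SE (ereduct (ELP A E [:: r]) PhiE) (restrict A X) (restrict A Y).
  move=> sXY; suff /(full sub consE) [] : S_pairs A (restrict A X) (restrict A Y) by [].
  by split=> [a [Xa aA]|a []] //; split=> //; apply: sXY.
have in_reduct : prules (ereduct (ELP A E [:: r]) PhiE) (ereduct_rule PhiE r).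
  by exists r; first left.
split=> [Y|X Y sXY Hneg].
- have [_ [_ [[_ HY] _]]] := SE Y Y (fun _ => id).
  exact/(prule_sat_agree (agree_on_restrict Y) (over _))/HY.
- have [_ [_ [_ [_ HX]]]] := SE X Y sXY.
  apply/(prule_sat_agree (agree_on_restrict X) (prule_over_pos (over _)))/HX.
  exists (ereduct_rule PhiE r); do !split=> //.
  exact/(neg_ok_agree (agree_on_restrict Y) (over _).2).
Qed.

Lemma tautological_of_SE_full : tautological A E r.
Proof.
move=> P _ W; apply: world_view_cons_se_valid => Phi /consistent_guess_catl.
exact: se_valid_of_SE_full.
Qed.

End FullSE.

(* A finite, A-restricted stand-in for a Φ-compatible set of models of R^Φ. *)
Definition witness_family (R : seq (erule V)) Phi (Ks : seq (seq V)) : Prop :=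
  [/\ forall K, K \in Ks -> {subset K <= A},
      forall K, K \in Ks -> forall l, l \in E -> l \notin Phi -> lit_sat (interp_of K) l,
      forall K, K \in Ks -> sat_reduct R Phi (interp_of K) &
      forall l, l \in Phi -> exists2 K, K \in Ks & ~ lit_sat (interp_of K) l].

Lemma witness_family_cons R Phi K Ks : {subset K <= A} ->
  (forall l, l \in E -> l \notin Phi -> lit_sat (interp_of K) l) ->
  sat_reduct R Phi (interp_of K) -> witness_family R Phi Ks -> witness_family R Phi (K :: Ks).
Proof.
move=> KA Kguard KR [KsA Ksguard KsR Ksfalse].
split=> [K'|K'|K'|l /Ksfalse [K' HK' nK']]; rewrite ?in_cons.
- by case/orP=> [/eqP -> //|/KsA].
- by case/orP=> [/eqP -> //|/Ksguard].
- by case/orP=> [/eqP -> //|/KsR].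
- by exists K'; rewrite ?in_cons ?HK' ?orbT.
Qed.

Lemma witness_family_nil R Phi Ks : witness_family R Phi Ks -> witness_family [::] Phi Ks.
Proof. by case=> KsA Ksguard _ Ksfalse; split=> // ? _ ? []. Qed.

Lemma consistent_guess_witnesses Phi : {subset Phi <= E} -> consistent_guess E Phi ->
  exists K Ks, witness_family [::] Phi (K :: Ks).
Proof.
(* K0 makes exactly the positive literals of E outside Φ true; consistency of Φ makes it
   satisfy the negative ones too, and K l falsifies l ∈ Φ without breaking this. *)
move=> sub cons; pose K0 := [seq a <- A | (LPos a \in E) && (LPos a \notin Phi)].
pose K (l : lit V) := if l.1 then K0 else l.2 :: K0.
have K0guard l : l \in E -> l \notin Phi -> lit_sat (interp_of K0) l.
  case: l => [[] a] Hl Hn; rewrite /lit_sat /interp_of /= mem_filter /LPos.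
  - by rewrite Hl Hn (wfE Hl).
  - case/andP=> [/andP [HE HPhi] _].
    by move: (cons a HE Hl); rewrite /LPos /LNeg (negbTE HPhi) (negbTE Hn).
have Kguard l' l : l' \in Phi -> l \in E -> l \notin Phi -> lit_sat (interp_of (K l')) l.
  case: l' => [[] a'] Hl'; rewrite /K /=; first exact: K0guard.
  case: l => [[] a] Hl Hn; have := K0guard _ Hl Hn; rewrite /lit_sat /interp_of /= in_cons.
  - by move=> ->; rewrite orbT.
  - by move=> nK0; case: eqP => [Eaa'|_] //=; rewrite Eaa' Hl' in Hn.
exists K0, (map K Phi); split.
- move=> K'; rewrite in_cons => /orP [/eqP ->|/mapP [l Hl ->]] a.
    by rewrite mem_filter => /andP [].
  rewrite /K; case: ifP => _; first by rewrite mem_filter => /andP [].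
  by rewrite in_cons => /orP [/eqP ->|]; [apply/wfE/sub | rewrite mem_filter => /andP []].
- move=> K'; rewrite in_cons => /orP [/eqP ->|/mapP [l' Hl' ->]]; first exact: K0guard.
  by move=> l; apply: Kguard.
- by move=> ? _ ? [].
- move=> l Hl; exists (K l); first by rewrite in_cons map_f ?orbT.
  case: l Hl => [[] a] Hl; rewrite /K /lit_sat /interp_of /=.
  + by rewrite mem_filter /LPos Hl andbF.
  + by rewrite mem_head.
Qed.

Lemma witness_family_of_realizable Phi : realizable (ELP A E [:: r]) Phi ->
  {subset Phi <= E} -> exists Js, witness_family [:: r] Phi Js.
Proof.
move=> [II [models [_ [Hin Hout]]]] sub.
have [Js [JsII Jsfalse]] := finite_falsifiers (fun l Hl => wfE (sub l Hl)) Hin.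
exists Js; split=> // [J /JsII [I _ [] //]|J /JsII [I HI [_ ag]] l Hl Hn|J /JsII [I HI [_ ag]]].
- exact/(lit_sat_agree ag (wfE Hl))/(Hout _ Hl Hn _ HI).
- have /is_model_ereduct [_ HM] := models I HI.
  by move=> _ [<-|[]]; apply/(prule_sat_agree ag (over _))/HM; left.
Qed.

Lemma realizable_of_probe Phi bs : {subset Phi <= E} ->
  compatible (E ++ E) Phi (is_answer_set (ereduct (probe A E Phi bs [:: r]) Phi)) ->
  realizable (ELP A E [:: r]) Phi.
Proof.
move=> sub [[I0 AS0] [Hin Hout]].
exists (fun J => exists2 I, is_answer_set (ereduct (probe A E Phi bs [:: r]) Phi) I &
                            J = restrict A I).
split; [|split; [|split]].
- move=> _ [I [/is_model_ereduct [_ HI] _] ->]; apply/is_model_ereduct.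
  split=> [a [] //|_ [<-|[]]].
  by apply/(prule_sat_agree (agree_on_restrict I) (over _))/HI/R_in_probe; left.
- by exists (restrict A I0), I0.
- move=> l Hl; have [I [ASI nl]] := Hin l Hl; exists (restrict A I); split; first by exists I.
  by move/(lit_sat_agree (agree_on_restrict I) (wfE (sub l Hl))).
- move=> l Hl Hn _ [I ASI ->]; apply/(lit_sat_agree (agree_on_restrict I) (wfE Hl)).
  by apply: Hout ASI; rewrite // mem_cat Hl.
Qed.

Section Tautological.
Hypothesis V_infinite : forall s : seq V, exists v, v \notin s.
Hypothesis taut : tautological A E r.

Lemma fresh_branches (Bs : seq (seq V * seq V)) :
  (forall B, B \in Bs -> {subset B.1 <= B.2} /\ {subset B.2 <= A}) ->
  exists2 bs, map snd bs = Bs & branches_ok A bs.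
Proof.
elim: Bs => [|B Bs IH] HB; first by exists [::].
have [|bs Ebs [uniq_bs fresh_bs XY_bs YA_bs]] := IH.
  by move=> B' HB'; apply: HB; rewrite in_cons HB' orbT.
have [p] := V_infinite (A ++ map fst bs); rewrite mem_cat negb_or => /andP [pA pbs].
have [XY YA] := HB B (mem_head _ _).
exists ((p, B) :: bs); first by rewrite /= Ebs.
split=> [|b|b|b]; rewrite ?in_cons.
- by rewrite /= pbs.
- by case/orP=> [/eqP -> //|/fresh_bs].
- by case/orP=> [/eqP -> //|/XY_bs].
- by case/orP=> [/eqP -> //|/YA_bs].
Qed.

Lemma world_view_probe_of_witnesses (R : seq (erule V)) Phi (X Y : seq V) Ys :
  {subset Phi <= E} -> (forall r0, List.In r0 R -> wf_erule A E r0) ->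
  witness_family R Phi (Y :: Ys) -> {subset X <= Y} ->
  {subset Y <= X} \/ ~ sat_gl_reduct R Phi (interp_of X) (interp_of Y) ->
  exists2 bs, branches_ok A bs & exists p, [/\ (p, (X, Y)) \in bs,
    is_answer_set (ereduct (probe A E Phi bs R) Phi) (interp_of (p :: Y)) &
    world_view (probe A E Phi bs R) (is_answer_set (ereduct (probe A E Phi bs R) Phi))].
Proof.
move=> sub wfR [YsA Ysguard YsR Ysfalse] XY minimal.
set Bs := (X, Y) :: [seq (J, J) | J <- Ys].
have [bs Ebs bs_ok] : exists2 bs, map snd bs = Bs & branches_ok A bs.
  apply: fresh_branches => B; rewrite in_cons => /orP [/eqP ->|/mapP [J HJ ->]] /=.
    by split=> //; apply: YsA (mem_head _ _).
  by split=> //; apply: YsA; rewrite in_cons HJ orbT.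
have get B : B \in Bs -> exists2 b, b \in bs & b.2 = B.
  by rewrite -Ebs => /mapP [b Hb ->]; exists b.
have AS b : b \in bs -> is_answer_set (ereduct (probe A E Phi bs R) Phi) (interp_of (b.1 :: b.2.2)).
  move=> Hb; have shape := map_f snd Hb; rewrite Ebs in_cons in shape.
  have b2 : b.2.2 \in Y :: Ys.
    by case/orP: shape => [/eqP -> | /mapP [J HJ ->]]; rewrite ?mem_head // in_cons HJ orbT.
  apply/(branch_answer_set wfE bs_ok wfR Hb (Ysguard _ b2) (YsR _ b2)).
  by case/orP: shape => [/eqP -> //|/mapP [J _ ->]]; left.
have [b0 Hb0 Eb0] := get (X, Y) (mem_head _ _).
exists bs => //; exists b0.1; split; first by rewrite -Eb0 -surjective_pairing.
  by have := AS b0 Hb0; rewrite Eb0.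
apply: (world_view_probe_branches wfE sub bs_ok Hb0 AS) => l Hl.
have [J HJ nJ] := Ysfalse l Hl; move: HJ; rewrite in_cons => /orP [/eqP EJ|HJ].
  by exists b0; rewrite // Eb0 -EJ.
have [|b Hb Eb] := get (J, J); first by rewrite in_cons map_f ?orbT.
by exists b; rewrite // Eb.
Qed.

Lemma world_view_probe_taut Phi bs : {subset Phi <= E} -> branches_ok A bs ->
  forall W, world_view (probe A E Phi bs [:: r]) W <-> world_view (probe A E Phi bs [::]) W.
Proof. by move=> sub bs_ok; apply/taut/wf_context. Qed.

Lemma realizable_of_tautological Phi : {subset Phi <= E} -> consistent_guess E Phi ->
  realizable (ELP A E [:: r]) Phi.
Proof.
move=> sub cons; have [K [Ks fam]] := consistent_guess_witnesses sub cons.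
have [bs bs_ok [p [_ _ wv]]] :=
  world_view_probe_of_witnesses sub wf_nil fam (fun _ => id) (or_introl (fun _ => id)).
have [_ compat] := world_view_probe_elim sub wf_single ((world_view_probe_taut sub bs_ok _).2 wv).
exact: realizable_of_probe compat.
Qed.

Lemma reduct_sat_of_tautological Phi (Y : seq V) Ys : {subset Phi <= E} ->
  witness_family [::] Phi (Y :: Ys) -> prule_sat (interp_of Y) (ereduct_rule Phi r).
Proof.
move=> sub fam.
have [bs bs_ok [p [Hp ASp wv]]] :=
  world_view_probe_of_witnesses sub wf_nil fam (fun _ => id) (or_introl (fun _ => id)).
have [eqAS _] := world_view_probe_elim sub wf_single ((world_view_probe_taut sub bs_ok _).2 wv).
have [/is_model_ereduct [_ HM] _] := (eqAS _).1 ASp.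
have [_ fresh _ _] := bs_ok.
apply/(prule_sat_agree (agree_on_cons Y (fresh _ Hp)) (over _)).
by apply: HM; apply: R_in_probe; left.
Qed.

Lemma gl_reduct_sat_of_tautological Phi (X Y : seq V) Ys : {subset Phi <= E} ->
  witness_family [:: r] Phi (Y :: Ys) -> {subset X <= Y} ->
  sat_gl_reduct [:: r] Phi (interp_of X) (interp_of Y).
Proof.
move=> sub fam XY; apply: NNPP => nsat.
have [bs bs_ok [p [Hp ASp wv]]] :=
  world_view_probe_of_witnesses sub wf_single fam XY (or_intror nsat).
have [eqAS _] := world_view_probe_elim sub wf_nil ((world_view_probe_taut sub bs_ok _).1 wv).
have [_ guards Ysat _] := fam.
move: ((eqAS _).1 ASp).
rewrite (branch_answer_set wfE bs_ok wf_nil Hp (guards _ (mem_head _ _))) //.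
case=> [YX|]; last by case=> ? [].
apply: nsat => _ [<-|[]] Hneg.
have agXY : agree_on A (interp_of X) (interp_of Y) by move=> a _; split=> [/XY|/YX].
apply/(prule_sat_agree agXY (prule_over_pos (over _)))/pos_rule_sat => //.
by apply: (Ysat _ (mem_head _ _)); left.
Qed.

Lemma SE_of_tautological Phi X Y : {subset Phi <= E} -> consistent_guess E Phi ->
  S_pairs A X Y -> is_SE (ereduct (ELP A E [:: r]) Phi) X Y.
Proof.
(* Adding to Φ the literals of E false in Y makes Y compatible with the guess without
   changing how the reduct of r is evaluated at Y. *)
move=> sub cons [sXY sYA].
have [Phi' [Phi_Phi' sub' cons' new_false old_true]] := guess_extension Y sub cons.
have [Js fam] := witness_family_of_realizable (realizable_of_tautological sub' cons') sub'.
have [Ys YsA agY] := finite_restriction A Y.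
have [Xs XsA agX] := finite_restriction A X.
have XsYs : {subset Xs <= Ys}.
  by move=> a Ha; have aA := XsA a Ha; apply/(agY a aA)/sXY/(agX a aA).
have Ysguard l : l \in E -> l \notin Phi' -> lit_sat (interp_of Ys) l.
  by move=> Hl Hn; apply/(lit_sat_agree agY (wfE Hl))/old_true.
have Ysat : prule_sat (interp_of Ys) (ereduct_rule Phi' r).
  apply: (reduct_sat_of_tautological sub').
  by apply: witness_family_cons YsA Ysguard _ (witness_family_nil fam) => ? [].
have XsYs_gl : sat_gl_reduct [:: r] Phi' (interp_of Xs) (interp_of Ys).
  apply: gl_reduct_sat_of_tautological sub' (witness_family_cons YsA Ysguard _ fam) XsYs.
  by move=> _ [<-|[]].
have [body_ext neg_ext] := ereduct_rule_guess_ext r Phi_Phi' new_false.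
do 2!split=> //; split.
- apply/is_model_ereduct; split=> // _ [<-|[]] /body_ext.
  exact: (prule_sat_agree agY (over _)).2 Ysat.
- apply/is_model_gl_ereduct; split=> [a /sXY /sYA //|_ [<-|[]] /neg_ext Hneg].
  rewrite (pos_rule_ereduct_rule Phi Phi').
  apply/(prule_sat_agree agX (prule_over_pos (over _)))/XsYs_gl; first by left.
  exact/(neg_ok_agree agY (over _).2).
Qed.

End Tautological.

End SingleRule.

Theorem lemma4 (V : eqType) (V_infinite : forall s : seq V, exists v, v \notin s)
  (A : seq V) (E : seq (lit V)) (r : erule V)
  (wf : wf_elp (ELP A E [:: r])) :
  tautological A E r <->
  (forall Phi : seq (lit V), {subset Phi <= E} -> consistent_guess E Phi ->
     forall X Y : interp V,
       SE_fun (ELP A E [:: r]) Phi X Y <-> S_pairs A X Y).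
Proof.
split=> [taut Phi sub cons X Y|]; last exact: tautological_of_SE_full.
split=> [[_ [sXY [sYA _]]] //|SXY]; split.
- exact: realizable_of_tautological V_infinite taut Phi sub cons.
- exact: SE_of_tautological V_infinite taut Phi X Y sub cons SXY.
Qed.
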